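(* Let $m\geq2$, $q$ a power of the prime $p$, $\mathcal{S}\leq\mathrm{U}_{2m+1}(\mathbb{F}_q)$ the Sylow $p$-subgroup of lower unitriangular matrices, $\mathcal{A}=\{X_{\mathbbm{1},P,\alpha}\}$ and $\mathcal{A}_0=\{X_{\mathbbm{1},P,0}\}$. Then $C_{\mathcal{S}}(\mathcal{A})\leq\mathcal{A}_0$.
   Context: $\overline{x}=x^q$ on $\mathbb{F}_{q^2}$, applied entrywise. $Q_k$ is the $k\times k$ matrix with $1$ on the skew-diagonal and $0$ elsewhere; $\mathrm{U}_{2m+1}(\mathbb{F}_q)=\{A\in\mathrm{GL}_{2m+1}(\mathbb{F}_{q^2}):\overline{A}^TQ_{2m+1}A=Q_{2m+1}\}$. $B^F=Q_mB^TQ_m$. $P$ is conjugate-skew-persymmetric if $\overline{P}^F=-P$; for a $1\times m$ vector $\alpha$, $P$ is $\alpha$-conjugate-skew-persymmetric if $P+\overline{P}^F=-Q_m\overline{\alpha}^T\alpha$. The elements of $\mathcal{S}$ are exactly $X_{D,P,\alpha}=\begin{pmatrix}(\overline{D}^F)^{-1}&0&0\\ \alpha&1&0\\ DP&-DQ_m\overline{\alpha}^T&D\end{pmatrix}$ with $D$ lower unitriangular $m\times m$, $\alpha$ a $1\times m$ vector, $P$ $\alpha$-conjugate-skew-persymmetric; $\mathcal{A}$ is the set of those with $D=\mathbbm{1}$ (identity), $\mathcal{A}_0$ those with $D=\mathbbm{1}$ and $\alpha=0$. *)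

From HB Require Import structures.
From mathcomp Require Import all_boot all_order all_algebra all_field.
Set Implicit Arguments. Unset Strict Implicit. Unset Printing Implicit Defensive.
Import GRing.Theory.
Local Open Scope ring_scope.

(* F plays the role of F_{q^2}; conjugation is x |-> x^q, entrywise. *)
Definition conjq (F : finFieldType) (q : nat) (r c : nat) (A : 'M[F]_(r, c)) :
  'M[F]_(r, c) := map_mx (fun x => x ^+ q) A.

Definition Qmx (F : finFieldType) (k : nat) : 'M[F]_k :=
  \matrix_(i < k, j < k) ((i + j)%N == k.-1)%:R.

Definition flipT (F : finFieldType) (m : nat) (B : 'M[F]_m) : 'M[F]_m :=
  Qmx F m *m B^T *m Qmx F m.

Definition unitaryU (F : finFieldType) (q m : nat) (A : 'M[F]_(m + 1 + m)) : Prop :=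
  A \in unitmx /\ (conjq q A)^T *m Qmx F (m + 1 + m) *m A = Qmx F (m + 1 + m).

Definition lower_unitri (F : finFieldType) (n : nat) (A : 'M[F]_n) : Prop :=
  (forall i j : 'I_n, (i < j)%N -> A i j = 0) /\ (forall i : 'I_n, A i i = 1).

Definition inS (F : finFieldType) (q m : nat) (A : 'M[F]_(m + 1 + m)) : Prop :=
  unitaryU q A /\ lower_unitri A.

Definition acsp (F : finFieldType) (q m : nat) (alpha : 'rV[F]_m) (P : 'M[F]_m) : Prop :=
  P + flipT (conjq q P) = - (Qmx F m *m (conjq q alpha)^T *m alpha).

Definition Xmat (F : finFieldType) (q m : nat) (P : 'M[F]_m) (alpha : 'rV[F]_m) :
  'M[F]_(m + 1 + m) :=
  block_mx (block_mx (1%:M : 'M[F]_m) 0 alpha (1%:M : 'M[F]_1)) 0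
           (row_mx P (- (Qmx F m *m (conjq q alpha)^T))) (1%:M : 'M[F]_m).

Definition inA (F : finFieldType) (q m : nat) (X : 'M[F]_(m + 1 + m)) : Prop :=
  exists (P : 'M[F]_m) (alpha : 'rV[F]_m), acsp q alpha P /\ X = Xmat q P alpha.

Definition inA0 (F : finFieldType) (q m : nat) (X : 'M[F]_(m + 1 + m)) : Prop :=
  exists P : 'M[F]_m, acsp q 0 P /\ X = Xmat q P 0.

Definition in_centralizer_S_A (F : finFieldType) (q m : nat) (X : 'M[F]_(m + 1 + m)) : Prop :=
  inS q X /\ forall Y, inA q Y -> X *m Y = Y *m X.

From HB Require Import structures.
From mathcomp Require Import all_boot all_order all_algebra all_field.
From mathcomp Require Import zify.
Set Implicit Arguments. Unset Strict Implicit. Unset Printing Implicit Defensive.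
Import GRing.Theory.
Local Open Scope ring_scope.

(* An element X of S has the block shape Sblock L1 a B c L2 with respect to
   m + 1 + m.  Commuting with the elements X_{1, r E_{i',i}, e_i} of A
   (i' = m + 1 - i), which exist because the trace r |-> r + r^q maps F_{q^2}
   onto F_q, forces L1 = L2 = 1 and c e_i = - e_{i'}^T a for every i; as
   m >= 2 this gives a = 0 and c = 0.  Unitarity of X then says exactly that B
   is conjugate-skew-persymmetric, i.e. X = X_{1,B,0}. *)

Lemma card_roots_lt_size (F : finFieldType) (f : {poly F}) :
  f != 0 -> (#|[set x | root f x]| < size f)%N.
Proof.
move=> f_neq0; rewrite cardE; apply: max_poly_roots => //; last exact: enum_uniq.
by apply/allP => x; rewrite mem_enum inE.
Qed.

Section FrobeniusTrace.

Variables (F : finFieldType) (q : nat).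
Hypotheses (q_pchar : [pchar F].-nat q) (q_gt1 : (1 < q)%N) (card_F : #|F| = (q * q)%N).

Let frobD (x y : F) : (x + y) ^+ q = x ^+ q + y ^+ q.
Proof. exact: exprDn_pchar. Qed.

Let frobK (x : F) : (x ^+ q) ^+ q = x.
Proof. by rewrite -exprM -card_F expf_card. Qed.

Lemma card_frob_fixed : (#|[set t : F | t ^+ q == t]| <= q)%N.
Proof.
have size_f : size ('X^q - 'X : {poly F}) = q.+1.
  by rewrite size_polyDl ?size_polyXn // size_polyN size_polyX ltnS.
have f_neq0 : ('X^q - 'X : {poly F}) != 0 by rewrite -size_poly_eq0 size_f.
rewrite -ltnS -size_f; apply: leq_ltn_trans (card_roots_lt_size f_neq0).
apply/subset_leq_card/subsetP => t; rewrite !inE.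
by rewrite /root !hornerE subr_eq0.
Qed.

Lemma card_frob_trace_fiber (t : F) :
  (#|[set r : F | (r + r ^+ q == t)%R]| <= q)%N.
Proof.
have size_f : size ('X^q + ('X - t%:P) : {poly F}) = q.+1.
  by rewrite size_polyDl ?size_polyXn // size_XsubC ltnS.
have f_neq0 : ('X^q + ('X - t%:P) : {poly F}) != 0 by rewrite -size_poly_eq0 size_f.
rewrite -ltnS -size_f; apply: leq_ltn_trans (card_roots_lt_size f_neq0).
apply/subset_leq_card/subsetP => r; rewrite !inE.
by rewrite /root !hornerE => /eqP <-; rewrite subr_eq0 addrC.
Qed.

(* The trace x + x^q lands in the fixed field of size at most q, and its
   fibres have size at most q, so missing a single fixed value would leave
   at most (q - 1) q < q^2 elements in F. *)
Lemma frob_trace_onto (t : F) : t ^+ q = t -> exists r : F, r + r ^+ q = t.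
Proof.
move=> t_fixed.
case: (pickP [pred r : F | r + r ^+ q == t]) => [r /eqP | no_r]; first by exists r.
pose S := [set s : F | s ^+ q == s].
have t_in_S : t \in S by rewrite inE t_fixed.
suff : (#|F| <= (#|S| - 1) * q)%N.
  by rewrite card_F; have := card_frob_fixed; rewrite -/S; nia.
rewrite -[X in (X <= _)%N]sum1_card.
rewrite (partition_big (fun r => r + r ^+ q) [pred s | (s \in S) && (s != t)]) /=.
  rewrite (cardsD1 t S) t_in_S add1n subn1 -sum_nat_const.
  rewrite [X in (_ <= X)%N]big_mkcond [X in (X <= _)%N]big_mkcond /=.
  apply: leq_sum => s _; rewrite !inE andbC; case: ifP => // _.
  apply: leq_trans (card_frob_trace_fiber s); rewrite -sum1_card.
  by apply: eq_leq; apply: eq_bigl => r; rewrite !inE.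
move=> r _; rewrite inE frobD frobK addrC eqxx /=.
by have /= -> := no_r r.
Qed.

End FrobeniusTrace.

Section SkewIdentity.
Variable F : finFieldType.

Lemma QmxE k (i j : 'I_k) : Qmx F k i j = (j == rev_ord i)%:R.
Proof.
rewrite mxE; congr ((nat_of_bool _)%:R); move: (ltn_ord i) (ltn_ord j) => lt_ik lt_jk.
by apply/idP/idP => /eqP h; apply/eqP; [apply: val_inj => /= | rewrite h /=]; lia.
Qed.

Lemma mulQmxE k n (M : 'M[F]_(k, n)) i j : (Qmx F k *m M) i j = M (rev_ord i) j.
Proof.
rewrite mxE (bigD1 (rev_ord i)) //= big1 ?addr0; first by rewrite QmxE eqxx mul1r.
by move=> l /negbTE l_neq; rewrite QmxE l_neq mul0r.
Qed.

Lemma mulmxQmxE k n (M : 'M[F]_(n, k)) i j : (M *m Qmx F k) i j = M i (rev_ord j).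
Proof.
rewrite mxE (bigD1 (rev_ord j)) //= big1 ?addr0; first by rewrite QmxE rev_ordK eqxx mulr1.
by move=> l l_neq; rewrite QmxE eq_sym (can2_eq rev_ordK rev_ordK) (negbTE l_neq) mulr0.
Qed.

Lemma mulQmxQmx k : Qmx F k *m Qmx F k = 1%:M.
Proof. by apply/matrixP => i j; rewrite mulQmxE QmxE rev_ordK !mxE eq_sym. Qed.

Lemma mulQmx_delta k n (i : 'I_k) (j : 'I_n) :
  Qmx F k *m delta_mx i j = delta_mx (rev_ord i) j.
Proof. by apply/matrixP => a b; rewrite mulQmxE !mxE (can2_eq rev_ordK rev_ordK). Qed.

Lemma Qmx_block m : Qmx F (m + 1 + m) =
  block_mx (block_mx 0 0 0 1%:M) (col_mx (Qmx F m) 0) (row_mx (Qmx F m) 0) 0.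
Proof.
apply/matrixP => i j; rewrite mxE -(splitK i) -(splitK j).
case: (split i) => [i1 | i2]; case: (split j) => [j1 | j2];
  rewrite ?block_mxEul ?block_mxEur ?block_mxEdl ?block_mxEdr.
{ rewrite -(splitK i1) -(splitK j1).
  case: (split i1) => [i3 | i3]; case: (split j1) => [j3 | j3];
  rewrite ?block_mxEul ?block_mxEur ?block_mxEdl ?block_mxEdr ?mxE -?val_eqE /=;
  move: (ltn_ord i3) (ltn_ord j3) => *; do ?case: eqP => //; lia. }
{ rewrite -(splitK i1); case: (split i1) => [i3 | i3];
  rewrite ?col_mxEu ?col_mxEd ?QmxE ?mxE -?val_eqE /=;
  move: (ltn_ord i3) (ltn_ord j2) => *; do ?case: eqP => //; lia. }
{ rewrite -(splitK j1); case: (split j1) => [j3 | j3];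
  rewrite ?row_mxEl ?row_mxEr ?QmxE ?mxE -?val_eqE /=;
  move: (ltn_ord i2) (ltn_ord j3) => *; do ?case: eqP => //; lia. }
rewrite mxE /=; move: (ltn_ord i2) (ltn_ord j2) => *; case: eqP => //; lia.
Qed.

End SkewIdentity.

Section ConjqZeroOne.
Variables (F : finFieldType) (q : nat).
Hypothesis q_gt0 : (0 < q)%N.

Let pow01 (b : bool) : (b%:R : F) ^+ q = b%:R.
Proof. by case: b; rewrite /= ?expr1n // expr0n eqn0Ngt q_gt0. Qed.

Lemma conjq0 r c : conjq q (0 : 'M[F]_(r, c)) = 0.
Proof. by apply/matrixP => i j; rewrite !mxE expr0n eqn0Ngt q_gt0. Qed.

Lemma conjq1 n : conjq q (1%:M : 'M[F]_n) = 1%:M.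
Proof. by apply/matrixP => i j; rewrite !mxE pow01. Qed.

Lemma conjq_delta r c (i : 'I_r) (j : 'I_c) :
  conjq q (delta_mx i j : 'M[F]_(r, c)) = delta_mx i j.
Proof. by apply/matrixP => a b; rewrite !mxE pow01. Qed.

End ConjqZeroOne.

Section RowsCols.
Variable R : nzRingType.

Lemma row_fixed_eq1 n (L : 'M[R]_n) :
  (forall i, (delta_mx 0 i : 'rV[R]_n) *m L = delta_mx 0 i) -> L = 1%:M.
Proof. by move=> fixL; apply/row_matrixP => i; rewrite !rowE mulmx1 fixL. Qed.

Lemma col_fixed_eq1 n (L : 'M[R]_n) :
  (forall i, L *m (delta_mx i 0 : 'cV[R]_n) = delta_mx i 0) -> L = 1%:M.
Proof.
move=> fixL; apply/matrixP => i j; have := congr1 (fun M : 'cV[R]_n => M i 0) (fixL j).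
by rewrite -colE !mxE andbT.
Qed.

(* Entry (f i, l) reads c (f i) 0 * (l == i) = a 0 l, and every l differs from
   some i once n > 1. *)
Lemma delta_outer_eq0 n (f : 'I_n -> 'I_n) (a : 'rV[R]_n) (c : 'cV[R]_n) :
  (1 < n)%N -> (forall i, c *m delta_mx 0 i = delta_mx (f i) 0 *m a) ->
  a = 0 /\ c = 0.
Proof.
move=> n_gt1 eq_ca; pose o0 : 'I_n := Ordinal (ltnW n_gt1).
have entry i j l : c j 0 * (l == i)%:R = (j == f i)%:R * a 0 l.
  have := congr1 (fun M : 'M[R]_n => M j l) (eq_ca i).
  by rewrite !mxE !big_ord1 !mxE /= andbT.
have a0 : a = 0.
  apply/rowP => l; have [i l_neq_i] : exists i : 'I_n, l != i.
    case: (l =P o0) => [->|/eqP]; last by exists o0.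
    by exists (Ordinal n_gt1); apply/eqP => /(congr1 val).
  by have := entry i (f i) l; rewrite eqxx mul1r (negbTE l_neq_i) mulr0 mxE.
split=> //; apply/colP => j.
by have := entry o0 j o0; rewrite a0 !mxE eqxx mulr1 mulr0.
Qed.

End RowsCols.

(* The block shape, with respect to m + 1 + m, of the lower unitriangular
   matrices: X_{D,P,alpha} is Sblock (Dbar^F)^-1 alpha (D P) (- D Q alpha^T) D. *)
Definition Sblock (R : nzRingType) m (L1 : 'M[R]_m) (a : 'rV[R]_m) (B : 'M[R]_m)
    (c : 'cV[R]_m) (L2 : 'M[R]_m) : 'M[R]_(m + 1 + m) :=
  block_mx (block_mx L1 0 a 1%:M) 0 (row_mx B c) L2.

Lemma lower_unitri_Sblock (F : finFieldType) m (X : 'M[F]_(m + 1 + m)) :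
  lower_unitri X -> exists L1 a B c L2, X = Sblock L1 a B c L2.
Proof.
move=> [X_upper0 X_diag1].
exists (ulsubmx (ulsubmx X)), (dlsubmx (ulsubmx X)), (lsubmx (dlsubmx X)),
  (rsubmx (dlsubmx X)), (drsubmx X).
have ur0 : ursubmx X = 0.
  apply/matrixP => i j; rewrite !mxE; apply: X_upper0 => /=.
  exact: leq_trans (ltn_ord i) (leq_addr _ _).
have ulur0 : ursubmx (ulsubmx X) = 0.
  apply/matrixP => i j; rewrite !mxE; apply: X_upper0 => /=.
  exact: leq_trans (ltn_ord i) (leq_addr _ _).
have uldr1 : drsubmx (ulsubmx X) = 1%:M.
  by apply/matrixP => i j; rewrite !ord1 !mxE; apply: X_diag1.
by rewrite /Sblock -ur0 -ulur0 -uldr1 hsubmxK !submxK.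
Qed.

Lemma Sblock_commute (R : nzRingType) m (L1 : 'M[R]_m) a B c L2 al P w :
  Sblock L1 a B c L2 *m Sblock 1%:M al P w 1%:M =
  Sblock 1%:M al P w 1%:M *m Sblock L1 a B c L2 ->
  [/\ al *m L1 = al, L2 *m w = w & c *m al + L2 *m P = P *m L1 + w *m a].
Proof.
rewrite /Sblock !mulmx_block !mulmx0 !mul0mx !mulmx1 !mul1mx !addr0 !add0r.
rewrite !mul_row_block !mul_mx_row ?mulmx0 ?mul0mx ?mulmx1 ?mul1mx ?addr0 ?add0r ?add_row_mx.
move/eq_block_mx => [/eq_block_mx [_ _ eq_dl _] _ /eq_row_mx [eq_l eq_r] _].
split; first by apply: (addrI a); rewrite eq_dl addrC.
  by apply: (addIr c); rewrite -eq_r addrC.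
by apply: (addrI B); rewrite addrA eq_l addrC.
Qed.

Section Unitary.
Variables (F : finFieldType) (q m : nat).
Hypothesis q_gt0 : (0 < q)%N.

Lemma Sblock_unitary_acsp (B : 'M[F]_m) :
  (conjq q (Sblock 1%:M 0 B 0 1%:M))^T *m Qmx F (m + 1 + m) *m Sblock 1%:M 0 B 0 1%:M
    = Qmx F (m + 1 + m) -> acsp q 0 B.
Proof.
rewrite /acsp /Sblock -scalar_mx_block /conjq map_block_mx map_row_mx -!/(conjq q _).
rewrite !conjq0 ?conjq1 // tr_block_mx tr_row_mx !trmx0 !trmx1.
rewrite Qmx_block !mulmx_block !mulmx0 !mul0mx !mulmx1 !mul1mx !addr0 !add0r.
move/eq_block_mx => [+ _ _ _].
rewrite !mul_col_row !mulmx0 !mul0mx !add_block_mx add0r => /eq_block_mx [eq_ul _ _ _].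
have := congr1 (mulmx (Qmx F m)) eq_ul.
by rewrite mulmx0 mulmxDr !mulmxA mulQmxQmx mul1mx /flipT addrC oppr0.
Qed.

Lemma acsp_delta (r : F) (i : 'I_m) : r + r ^+ q = -1 ->
  acsp q (delta_mx 0 i) (r *: delta_mx (rev_ord i) i).
Proof.
move=> trace_r; rewrite /acsp conjq_delta // trmx_delta /flipT.
apply/matrixP => a b; rewrite [LHS]mxE [RHS]mxE mulmxQmxE mulQmxE [in RHS]mxE.
rewrite big_ord1 mulQmxE !mxE !(can2_eq rev_ordK rev_ordK) rev_ordK.
by case: (a == rev_ord i); case: (b == i);
  rewrite ?mulr1 ?mulr0 ?expr0n ?eqn0Ngt ?q_gt0 ?oppr0 ?addr0.
Qed.

Lemma centralizer_Sblock (r : F) (L1 : 'M[F]_m) a B c L2 :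
  (1 < m)%N -> r + r ^+ q = -1 ->
  (forall Y, inA q Y -> Sblock L1 a B c L2 *m Y = Y *m Sblock L1 a B c L2) ->
  [/\ L1 = 1%:M, L2 = 1%:M, a = 0 & c = 0].
Proof.
move=> m_gt1 trace_r centX.
have rel i := Sblock_commute
  (centX _ (ex_intro _ _ (ex_intro _ _ (conj (acsp_delta i trace_r) erefl)))).
have w_delta i : - (Qmx F m *m (conjq q (delta_mx 0 i))^T) = - delta_mx (rev_ord i) 0.
  by rewrite conjq_delta // trmx_delta mulQmx_delta.
have L1_1 : L1 = 1%:M by apply: row_fixed_eq1 => i; have [] := rel i.
have L2_1 : L2 = 1%:M.
  apply: col_fixed_eq1 => j; have [_ + _] := rel (rev_ord j).
  by rewrite w_delta rev_ordK mulmxN => /oppr_inj.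
have [Na0 c0] : - a = 0 /\ c = 0.
  apply: (@delta_outer_eq0 _ _ (@rev_ord m) (- a) c m_gt1) => i; have [_ _] := rel i.
  by rewrite L1_1 L2_1 mulmx1 mul1mx w_delta mulNmx mulmxN addrC => /addrI.
by split=> //; apply/eqP; rewrite -oppr_eq0 Na0.
Qed.

End Unitary.

Unset Implicit Arguments.

Theorem theorem3p8 (p k : nat) (F : finFieldType) (m : nat) :
  prime p -> (0 < k)%N -> #|F| = ((p ^ k) ^ 2)%N -> (2 <= m)%N ->
  forall X : 'M[F]_(m + 1 + m),
    in_centralizer_S_A (p ^ k) X -> inA0 (p ^ k) X.
Proof.
move=> p_prime k_gt0 card_F m_gt1 X [[[_ unitaryX] lowerX] centX].
set q := (p ^ k)%N in card_F unitaryX centX *.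
have q_gt1 : (1 < q)%N by rewrite -(exp1n k) ltn_exp2r // prime_gt1.
have q_gt0 : (0 < q)%N := ltnW q_gt1.
have card_Fqq : #|F| = (q * q)%N by rewrite card_F mulnn.
have p_char : p \in [pchar F].
  by apply: (card_finPcharP (n := (k * 2)%N)) => //; rewrite card_F expnM.
have q_pchar : [pchar F].-nat q.
  by rewrite pnatX (eq_pnat _ (pcharf_eq p_char)) pnat_id.
have [r trace_r] : exists r : F, r + r ^+ q = -1.
  by apply: (frob_trace_onto q_pchar q_gt1 card_Fqq); rewrite exprNn_pchar // expr1n.
have [L1 [a [B [c [L2 X_eq]]]]] := lower_unitri_Sblock lowerX.
rewrite {}X_eq in unitaryX centX *.
have [L1_1 L2_1 a0 c0] := centralizer_Sblock q_gt0 m_gt1 trace_r centX.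
rewrite {}L1_1 {}L2_1 {}a0 {}c0 {centX} in unitaryX *.
exists B; split; first by apply: (Sblock_unitary_acsp q_gt0).
by rewrite /Xmat conjq0 // trmx0 mulmx0 oppr0.
Qed.
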